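(* Let $n\in\{5,6,7\}$. The spanning subgraph $H$ of $P_n$ whose edges are those given by the prefix-reversals $r_4$ and $r_5$ is a disjoint union of $10$-cycles. Each such cycle consists of permutations of the same parity. Consequently, $P_n$ has an equitable proper $4$-coloring in which every color class has exactly $n!/4$ vertices. This coloring is obtained by properly $2$-coloring the cycles of $H$ consisting of even permutations with two colors, and the cycles consisting of odd permutations with two other colors.
   Context: For $n\geqslant 1$, the Pancake graph $P_n$ is the Cayley graph on the symmetric group $\mathrm{Sym}_n$, with permutations written in one-line notation $\pi=[\pi_1\pi_2\ldots\pi_n]$. Its generating set consists of the prefix-reversals $r_i$, $2\leqslant i\leqslant n$. Multiplying $\pi$ on the right by $r_i$ reverses the first $i$ entries: $\pi r_i=[\pi_i\pi_{i-1}\ldots\pi_1\pi_{i+1}\ldots\pi_n]$. Two vertices $\pi,\sigma$ are adjacent iff $\sigma=\pi r_i$ for some $2\leqslant i\leqslant n$. A proper coloring is equitable if the sizes of any two color classes differ by at most one. *)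

From mathcomp Require Import all_boot all_order all_fingroup.
Set Implicit Arguments. Unset Strict Implicit. Unset Printing Implicit Defensive.

(* Positions are 0-based: a permutation pi : 'S_n in one-line notation is
   [pi 0, pi 1, ..., pi (n-1)].  The prefix reversal r_i sends position j
   to position i-1-j for j < i and fixes the others. *)
Definition revn (i j : nat) : nat := if j < i then i.-1 - j else j.

Definition rev_pos (n i : nat) (j : 'I_n) : 'I_n := insubd j (revn i j).

(* sigma = pi r_i  (pi r_i)(j) = pi (r_i j), i.e. reversing the first i entries *)
Definition is_flip (n i : nat) (pi sigma : 'S_n) : bool :=
  [forall j : 'I_n, sigma j == pi (@rev_pos n i j)].

Definition pancake_adj (n : nat) : rel 'S_n :=
  fun pi sigma => [exists i : 'I_n.+1, (2 <= i) && is_flip i pi sigma].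

Definition H45_adj (n : nat) : rel 'S_n :=
  fun pi sigma => is_flip 4 pi sigma || is_flip 5 pi sigma.

Definition proper_coloring (T : finType) (e : rel T) (k : nat) (c : T -> 'I_k) : Prop :=
  forall x y, e x y -> c x != c y.

Definition equitable (T : finType) (k : nat) (c : T -> 'I_k) : Prop :=
  forall a b : 'I_k, #|[set x | c x == a]| <= #|[set x | c x == b]| + 1.

Arguments pancake_adj n : clear implicits.
Arguments H45_adj n : clear implicits.

From mathcomp Require Import all_boot all_order all_fingroup.
From mathcomp Require Import zify.
Set Implicit Arguments. Unset Strict Implicit. Unset Printing Implicit Defensive.

(* Reversing the segment [lo, hi] of
      positions is an involutive permutation; peeling off its outer
      transposition shows that it has parity odd (length / 2).  The prefix
      reversal r_i is the segment [0, i-1], so r_i is odd iff i/2 is odd: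
      r_4 and r_5 are even, while r_2, r_3, r_6, r_7 are odd.  Edges of P_n
      are left multiplications by these permutations.
   2. Cycles of H.  Applying r_4, r_5, r_4, r_5, ... to pi is a walk in H.
      On positions the walk acts through the first five entries only, so
      two explicit computations on {0,..,4} show that the walk returns to
      pi after exactly 10 steps and visits 10 distinct vertices.  Since the
      two H-neighbours of the m-th vertex are the (m+1)-th and (m-1)-th,
      the component of pi is this 10-cycle; it consists of permutations of
      one parity because r_4 and r_5 are even.
   3. Colouring.  The colour of x records its parity and the parity of its
      index on the 10-cycle through the root of its component.  H-edges
      flip the second bit, other edges of P_n (n <= 7) flip the first; left
      multiplication by r_4 and r_2 gives bijections showing that all four
      colour classes have size n!/4. *)

Definition revseg (lo hi j : nat) : nat := if lo <= j <= hi then lo + hi - j else j.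

Lemma revseg_invol lo hi : involutive (revseg lo hi).
Proof.
move=> j; rewrite {2}/revseg; case: ifP => hj; last by rewrite /revseg hj.
have hk : lo <= lo + hi - j <= hi by lia.
by rewrite /revseg hk; lia.
Qed.

Lemma revseg_lt n lo hi j : j < n -> hi < n -> revseg lo hi j < n.
Proof. by rewrite /revseg; case: ifP; lia. Qed.

Lemma revn_revseg i j : revn i j = revseg 0 i.-1 j.
Proof.
by rewrite /revn /revseg; case: i => [|i] /=; case: ifP => // ?; lia.
Qed.

Lemma insubd_invol n (g : nat -> nat) :
  involutive g -> involutive (fun j : 'I_n => insubd j (g j)).
Proof.
move=> gK j; apply: val_inj; rewrite !val_insubd.
by case: (ltnP (g j) n) => hg /=; rewrite ?gK ?ltn_ord // ltnNge hg.
Qed.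

Definition revseg_perm n lo hi : 'S_n :=
  perm (can_inj (@insubd_invol n _ (revseg_invol lo hi))).

Lemma val_revseg_perm n lo hi (j : 'I_n) :
  hi < n -> val (revseg_perm n lo hi j) = revseg lo hi j.
Proof. by move=> hhi; rewrite permE val_insubd revseg_lt. Qed.

Lemma revseg_perm_invol n lo hi : (revseg_perm n lo hi * revseg_perm n lo hi = 1)%g.
Proof.
apply/permP => j; rewrite permM !permE insubd_invol ?perm1 //.
exact: revseg_invol.
Qed.

Lemma revseg_perm_id n lo hi : hi <= lo -> revseg_perm n lo hi = 1%g.
Proof.
move=> hle; apply/permP => j; rewrite permE perm1; apply: val_inj.
rewrite val_insubd; case: ifP => // _; rewrite /revseg.
by case: ifP => //; case: j => /= j _; lia.
Qed.

Lemma revseg_perm_peel n (a b : 'I_n) :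
  a < b -> revseg_perm n a b = (tperm a b * revseg_perm n a.+1 b.-1)%g.
Proof.
move=> hab; have hb := ltn_ord b; apply/permP => j; apply: val_inj.
rewrite permM !val_revseg_perm; [|lia|lia].
case: tpermP => [->|->|hja hjb]; rewrite /revseg.
- by do ?case: ifP => ?; lia.
- by do ?case: ifP => ?; lia.
have /eqP ha : j <> a :> nat by move=> e; apply: hja (val_inj e).
have /eqP hb' : j <> b :> nat by move=> e; apply: hjb (val_inj e).
by do ?case: ifP => ?; lia.
Qed.

(* A reversal of a segment of length l is a product of l/2 transpositions. *)
Lemma odd_revseg_perm n lo hi :
  hi < n -> odd_perm (revseg_perm n lo hi) = odd (hi.+1 - lo)./2.
Proof.
have [k] := ubnP (hi - lo); elim: k lo hi => // k IH lo hi hk hhi.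
case: (leqP hi lo) => [hle | hlt].
  by rewrite revseg_perm_id // odd_perm1; case e: (hi.+1 - lo) => [|[|m]] //; lia.
have hlo : lo < n by lia.
have hne : Ordinal hlo != Ordinal hhi by rewrite -val_eqE /= ltn_eqF.
rewrite (@revseg_perm_peel n (Ordinal hlo) (Ordinal hhi)) //= odd_permM odd_tperm hne.
rewrite IH; [|lia|lia].
by have -> : hi.+1 - lo = (hi.-1.+1 - lo.+1).+2 by lia.
Qed.

Definition rho n i : 'S_n := revseg_perm n 0 i.-1.

Lemma rhoE n i (j : 'I_n) : rho n i j = rev_pos i j.
Proof. by rewrite permE /rev_pos revn_revseg. Qed.

Lemma val_rho n i (j : 'I_n) : i <= n -> val (rho n i j) = revn i j.
Proof. by move=> hi; rewrite val_revseg_perm ?revn_revseg //; have := ltn_ord j; lia. Qed.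

Lemma odd_rho n i : 0 < i <= n -> odd_perm (rho n i) = odd i./2.
Proof. by case/andP=> hi0 hin; rewrite odd_revseg_perm ?subn0 ?prednK //; lia. Qed.

Lemma rho_invol n i : (rho n i * rho n i = 1)%g.
Proof. exact: revseg_perm_invol. Qed.

Lemma is_flipE n i (pi sigma : 'S_n) : is_flip i pi sigma = (sigma == rho n i * pi)%g.
Proof.
apply/forallP/eqP => [h | ->]; last by move=> j; rewrite permM rhoE.
by apply/permP => j; rewrite permM rhoE; apply/eqP.
Qed.

Lemma H45_adjE n (pi sigma : 'S_n) :
  H45_adj n pi sigma = (sigma == rho n 4 * pi)%g || (sigma == rho n 5 * pi)%g.
Proof. by rewrite /H45_adj !is_flipE. Qed.

(* H is an undirected graph, because prefix reversals are involutions. *)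
Lemma H45_sym n : symmetric (H45_adj n).
Proof.
have back i (x y : 'S_n) : (y == rho n i * x)%g = (x == rho n i * y)%g.
  by apply/eqP/eqP => ->; rewrite mulgA rho_invol mul1g.
by move=> x y; rewrite !H45_adjE !(back _ x y).
Qed.

Definition flip_len (m : nat) : nat := if odd m then 5 else 4.

Fixpoint walk n (pi : 'S_n) (m : nat) : 'S_n :=
  if m is m'.+1 then (rho n (flip_len m') * walk pi m')%g else pi.
Arguments walk n pi m : simpl never.

Lemma walkS n (pi : 'S_n) m : walk pi m.+1 = (rho n (flip_len m) * walk pi m)%g.
Proof. by []. Qed.

(* The position read by the m-th walk permutation at position j. *)
Fixpoint walk_pos (m j : nat) : nat :=
  if m is m'.+1 then walk_pos m' (revn (flip_len m') j) else j.

Definition cyc n (pi : 'S_n) : seq 'S_n := mkseq (walk pi) 10.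

Lemma walk_pos_period : all (fun j => walk_pos 10 j == j) (iota 0 5).
Proof. by []. Qed.

Lemma walk_pos_separates : uniq [seq (walk_pos m 0, walk_pos m 1) | m <- iota 0 10].
Proof. by []. Qed.

Lemma walk_pos_fix m j : 5 <= j -> walk_pos m j = j.
Proof.
elim: m j => //= m IH j hj; rewrite IH /revn ?ifN //; rewrite -leqNgt;
  by apply: leq_trans hj; rewrite /flip_len; case: odd.
Qed.

Lemma walk_mul n (pi : 'S_n) m : walk pi m = (walk 1 m * pi)%g.
Proof. by elim: m => [|m IH]; rewrite ?mul1g // !walkS IH mulgA. Qed.

Lemma walk_edge n (pi : 'S_n) m : H45_adj n (walk pi m) (walk pi m.+1).
Proof. by rewrite H45_adjE walkS /flip_len; case: odd; rewrite eqxx ?orbT. Qed.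

Section Walk.

Variable n : nat.
Hypothesis n_ge5 : 5 <= n.

Lemma val_walk1 m (j : 'I_n) : val (walk 1 m j) = walk_pos m j.
Proof.
elim: m j => [|m IH] j; first by rewrite perm1.
rewrite walkS permM IH val_rho //.
by apply: leq_trans n_ge5; rewrite /flip_len; case: odd.
Qed.

Lemma walk1_eq a b :
  (forall j, j < 5 -> walk_pos a j = walk_pos b j) -> walk 1 a = walk 1 b :> 'S_n.
Proof.
move=> h; apply/permP => j; apply: val_inj; rewrite !val_walk1.
by case: (ltnP j 5) => hj; [apply: h | rewrite !walk_pos_fix].
Qed.

Lemma walk_period (pi : 'S_n) m : walk pi (m + 10) = walk pi m.
Proof.
elim: m => [|m IH].
  rewrite add0n walk_mul (walk1_eq (b := 0)) ?mul1g // => j hj.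
  by move/allP: walk_pos_period => /(_ j); rewrite mem_iota => /(_ hj) /eqP.
by rewrite addSn !walkS IH /flip_len oddD addbF.
Qed.

Lemma walk_mod (pi : 'S_n) m : walk pi m = walk pi (m %% 10).
Proof.
rewrite {1}(divn_eq m 10); elim: (m %/ 10) => [|k IH]; first by rewrite add0n.
by rewrite mulSn -addnA [10 + _]addnC walk_period.
Qed.

Lemma walk_inj (pi : 'S_n) l m : l < 10 -> m < 10 -> walk pi l = walk pi m -> l = m.
Proof.
move=> hl hm; rewrite !(walk_mul pi) => /mulIg e.
have pos k (hk : k < 5) : walk_pos l k = walk_pos m k.
  by rewrite -!(val_walk1 _ (Ordinal (leq_trans hk n_ge5))) e.
move/uniqP: walk_pos_separates => /(_ (0, 0) l m).
rewrite !inE !size_map !size_iota !(nth_map 0) ?size_iota // !nth_iota // !add0n.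
by rewrite !pos //; apply.
Qed.

Lemma walk_prev (pi : 'S_n) m : walk pi (m + 9) = (rho n (flip_len m.+1) * walk pi m)%g.
Proof.
have e := walk_period pi m; rewrite addnS walkS in e.
have -> : flip_len m.+1 = flip_len (m + 9) by rewrite /flip_len oddD addbT.
by rewrite -e mulgA rho_invol mul1g.
Qed.

Lemma walk_nbrs (pi sigma : 'S_n) m :
  H45_adj n (walk pi m) sigma = (sigma == walk pi m.+1) || (sigma == walk pi (m + 9)).
Proof. by rewrite walk_prev walkS H45_adjE /flip_len /=; case: odd; rewrite // orbC. Qed.

Lemma mem_cyc (pi x : 'S_n) : reflect (exists m, x = walk pi m) (x \in cyc pi).
Proof.
apply: (iffP mapP) => [[m _ ->] | [m ->]]; first by exists m.
by exists (m %% 10); [rewrite mem_iota ltn_pmod | exact: walk_mod].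
Qed.

Lemma cyc_uniq (pi : 'S_n) : uniq (cyc pi).
Proof.
rewrite map_inj_in_uniq ?iota_uniq // => l m.
by rewrite !mem_iota => hl hm; apply: walk_inj.
Qed.

Lemma index_cyc (pi : 'S_n) m : index (walk pi m) (cyc pi) = m %% 10.
Proof.
have hm : m %% 10 < 10 by rewrite ltn_pmod.
by rewrite walk_mod -{1}(nth_mkseq pi (walk pi) hm) index_uniq ?size_mkseq ?cyc_uniq.
Qed.

Lemma cyc_path (pi : 'S_n) : path.cycle (H45_adj n) (cyc pi).
Proof.
rewrite /cyc /mkseq /= !walk_edge /=.
by rewrite -(walk_period pi 0) add0n walk_edge.
Qed.

Lemma cyc_connect (pi sigma : 'S_n) : (sigma \in cyc pi) = connect (H45_adj n) pi sigma.
Proof.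
apply/idP/idP => [/mem_cyc [m ->] | hc].
  elim: m => [|m IH]; first exact: connect0.
  exact: connect_trans IH (connect1 (walk_edge _ _)).
have cl : closed (H45_adj n) (cyc pi).
  apply: intro_closed; first exact: sym_connect_sym (@H45_sym n).
  move=> x y + /mem_cyc [m ex]; rewrite ex walk_nbrs => /orP [] /eqP ->;
    by apply/mem_cyc; eexists.
by rewrite -(closed_connect cl hc); apply/mem_cyc; exists 0.
Qed.

Lemma card_H45_nbrs (pi : 'S_n) : #|[set sigma | H45_adj n pi sigma]| = 2.
Proof.
have -> : [set sigma | H45_adj n pi sigma] = [set walk pi 1; walk pi 9].
  by apply/setP => s; rewrite !inE (walk_nbrs pi s 0).
by rewrite cards2; case: eqP => // /walk_inj; move/(_ isT isT).
Qed.

(* H-edges preserve parity, since r_4 and r_5 are even. *)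
Lemma H45_parity (x y : 'S_n) : H45_adj n x y -> odd_perm y = odd_perm x.
Proof.
rewrite H45_adjE => /orP [] /eqP ->; rewrite odd_permM odd_rho //.
by rewrite (leq_trans _ n_ge5).
Qed.

Lemma connect_parity (x y : 'S_n) : connect (H45_adj n) x y -> odd_perm x = odd_perm y.
Proof.
move=> hc; have cl : closed (H45_adj n) [pred s | odd_perm s == odd_perm x].
  apply: intro_closed; first exact: sym_connect_sym (@H45_sym n).
  by move=> u v huv; rewrite !inE (H45_parity huv).
by have := closed_connect cl hc; rewrite !inE eqxx => /esym /eqP.
Qed.

(* The side of x in the proper 2-colouring of its (even) cycle in H. *)
Definition side (x : 'S_n) : bool := odd (index x (cyc (root (H45_adj n) x))).

Lemma side_flip (x y : 'S_n) : H45_adj n x y -> side y = ~~ side x.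
Proof.
move=> hxy; have Hcs := sym_connect_sym (@H45_sym n).
rewrite /side; have -> : root (H45_adj n) y = root (H45_adj n) x.
  by apply/esym/(rootP Hcs); apply: connect1.
set r := root (H45_adj n) x.
have : x \in cyc r by rewrite cyc_connect Hcs connect_root.
case/mem_cyc=> m ex; move: hxy; rewrite ex walk_nbrs => /orP [] /eqP ->;
  by rewrite !index_cyc !odd_mod //= ?oddD ?addbT.
Qed.

End Walk.

Lemma card_transport (T : finType) (f : T -> T) (A B : {set T}) :
  injective f -> (forall x, (f x \in B) = (x \in A)) -> #|A| = #|B|.
Proof.
move=> finj hAB; rewrite -(card_preimset B finj).
by apply: eq_card => x; rewrite inE hAB.
Qed.

Definition code (o b : bool) : 'I_4 := inord (2 * o + b).

Lemma val_code o b : code o b = 2 * o + b :> nat.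
Proof. by rewrite inordK //; case: o; case: b. Qed.

Lemma code_eq o1 b1 o2 b2 : (code o1 b1 == code o2 b2) = (o1 == o2) && (b1 == b2).
Proof.
by rewrite -(inj_eq (@ord_inj 4)) !val_code; case: o1; case: b1; case: o2; case: b2.
Qed.

Lemma code_ge2 o b : (2 <= code o b) = o.
Proof. by rewrite val_code; case: o; case: b. Qed.

Lemma codeE o b (a : 'I_4) : (code o b == a) = (o == (2 <= a)) && (b == odd a).
Proof.
rewrite -(inj_eq (@ord_inj 4)) val_code.
by case: a => [[|[|[|[|a]]]] ha] //; case: o; case: b.
Qed.

Definition col n (x : 'S_n) : 'I_4 := code (odd_perm x) (side x).

Definition col_class n (o b : bool) : {set 'S_n} :=
  [set x | (odd_perm x == o) && (side x == b)].

Section Colouring.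

Variable n : nat.
Hypothesis n_ge5 : 5 <= n.

(* All four colour classes have n!/4 elements: r_4 swaps the two sides
   within a parity and r_2 swaps the two parities. *)
Lemma card_col_class o b : #|col_class n o b| = n`! %/ 4.
Proof.
have r2_odd : odd_perm (rho n 2) by rewrite odd_rho // (leq_trans _ n_ge5).
have r4_even : odd_perm (rho n 4) = false by rewrite odd_rho // (leq_trans _ n_ge5).
pose parity_class o := [set x : 'S_n | odd_perm x == o].
have side_swap o' : #|col_class n o' false| = #|col_class n o' true|.
  apply: (card_transport (mulgI (rho n 4))) => x; rewrite !inE odd_permM r4_even /=.
  have hH : H45_adj n x (rho n 4 * x)%g by rewrite H45_adjE eqxx.
  by rewrite (side_flip n_ge5 hH); case: side.
have parity_swap : #|parity_class false| = #|parity_class true|.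
  apply: (card_transport (mulgI (rho n 2))) => x.
  by rewrite !inE odd_permM r2_odd; case: odd_perm.
have split_side o' : #|parity_class o'| = #|col_class n o' true| + #|col_class n o' false|.
  rewrite -(cardsID [set x | side x] (parity_class o')); congr (_ + _); apply: eq_card => x;
    by rewrite !inE; case: side; rewrite ?andbT ?andbF.
have total : #|parity_class false| + #|parity_class true| = n`!.
  rewrite -card_Sn -(cardsC (parity_class true)) addnC; congr (_ + _).
  by apply: eq_card => x; rewrite !inE; case: odd_perm.
move: (split_side false) (split_side true) (side_swap false) (side_swap true) => *.
have -> : n`! = 4 * #|col_class n o b| by case: o; case: b; lia.
by rewrite mulKn.
Qed.

Lemma col_proper_H45 : proper_coloring (H45_adj n) (@col n).
Proof.
move=> x y hxy; rewrite /col code_eq (side_flip n_ge5 hxy).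
by case: side; rewrite andbF.
Qed.

Lemma pancake_step (x y : 'S_n) :
  pancake_adj n x y -> exists2 i, 2 <= i <= n & y = (rho n i * x)%g.
Proof.
case/existsP=> [[i hi]] /andP [h2] /=; rewrite is_flipE => /eqP ->.
by exists i; rewrite ?h2.
Qed.

(* For n <= 7 the colouring is proper on P_n: r_4, r_5 change the side,
   and r_2, r_3, r_6, r_7 are odd. *)
Lemma col_proper_pancake : n <= 7 -> proper_coloring (pancake_adj n) (@col n).
Proof.
move=> n_le7 x y /pancake_step [i /andP [hi2 hin] ->].
rewrite /col code_eq odd_permM odd_rho ?hin ?(leq_trans _ hi2) //.
have [i45 | i_other] := boolP ((i == 4) || (i == 5)).
  have hH : H45_adj n x (rho n i * x)%g.
    by rewrite H45_adjE; case/orP: i45 => /eqP ->; rewrite eqxx ?orbT.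
  by rewrite (side_flip n_ge5 hH); case: side; rewrite andbF.
have -> : odd i./2.
  move: hi2 (leq_trans hin n_le7) i_other; clear hin.
  by case: i => [|[|[|[|[|[|[|[|i]]]]]]]].
by case: odd_perm.
Qed.

End Colouring.

Theorem mainTheorem6 (n : nat) (hn : n \in [:: 5; 6; 7]) :
  (forall pi : 'S_n, #|[set sigma | H45_adj n pi sigma]| = 2) /\
  (forall pi : 'S_n, exists cyc : seq 'S_n,
      [/\ size cyc = 10, uniq cyc, pi \in cyc, path.cycle (H45_adj n) cyc
        & forall sigma, (sigma \in cyc) = connect (H45_adj n) pi sigma]) /\
  (forall pi sigma : 'S_n, connect (H45_adj n) pi sigma ->
      odd_perm pi = odd_perm sigma) /\
  (exists c : 'S_n -> 'I_4,
      [/\ proper_coloring (pancake_adj n) c,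
          equitable c,
          (forall a : 'I_4, #|[set x | c x == a]| = n`! %/ 4),
          proper_coloring (H45_adj n) c
        & forall x : 'S_n, (2 <= c x) = odd_perm x]).
Proof.
have [n_ge5 n_le7] : 5 <= n /\ n <= 7 by move: hn; rewrite !inE => /or3P [] /eqP ->.
have card_col (a : 'I_4) : #|[set x : 'S_n | col x == a]| = n`! %/ 4.
  rewrite -(card_col_class n_ge5 (2 <= a) (odd a)).
  by apply: eq_card => x; rewrite !inE /col codeE.
split; first exact: card_H45_nbrs n_ge5.
split.
  move=> pi; exists (cyc pi); split.
  - by rewrite size_mkseq.
  - exact: (cyc_uniq n_ge5 pi).
  - by apply/(mem_cyc n_ge5); exists 0.
  - exact: (cyc_path n_ge5 pi).
  - exact: (cyc_connect n_ge5 pi).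
split; first exact: connect_parity n_ge5.
exists (@col n); split.
- exact: col_proper_pancake n_ge5 n_le7.
- by move=> a b; rewrite !card_col leq_addr.
- exact: card_col.
- exact: col_proper_H45 n_ge5.
- by move=> x; rewrite /col code_ge2.
Qed.
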